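(* Let $n$ be a positive integer and let $\alpha,\beta,\gamma,\delta: \mathcal{P}(n) \to [0,\infty)$ satisfy \[ \alpha(A)\beta(B) \leq \gamma(A \cup B)\,\delta(A \cap B) \quad \text{for all } A,B \in \mathcal{P}(n). \] Then \[ \Big(\sum_{A \in \mathcal{P}(n)} \alpha(A)q^{|A|}\Big)\Big( \sum_{B \in \mathcal{P}(n)} \beta(B)q^{|B|}\Big) \ll \Big(\sum_{C \in \mathcal{P}(n)} \gamma(C)q^{|C|}\Big)\Big( \sum_{D \in \mathcal{P}(n)} \delta(D)q^{|D|}\Big). \] Equivalently, for every integer $k \ge 0$, \[ \sum_{|A|+|B|=k}\alpha(A)\beta(B) \le \sum_{|C|+|D|=k}\gamma(C)\delta(D), \] where the sums range over pairs of subsets of $[n]$.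
   Context: $[n]=\{1,\dots,n\}$ and $\mathcal{P}(n)$ denotes the power set of $[n]$. For real polynomials $P(q),R(q)$, $P(q) \ll R(q)$ means that every coefficient of $R(q)-P(q)$ is a non-negative real number. *)

From HB Require Import structures.
From mathcomp Require Import all_boot all_order all_algebra.
Set Implicit Arguments. Unset Strict Implicit. Unset Printing Implicit Defensive.
Import Order.TTheory GRing.Theory Num.Theory.
Local Open Scope ring_scope.

Definition poly_ll (R : numDomainType) (P Q : {poly R}) : Prop :=
  forall i : nat, 0 <= (Q - P)`_i.

Definition setgen (R : numDomainType) (n : nat) (f : {set 'I_n} -> R) : {poly R} :=
  \sum_(A : {set 'I_n}) f A *: 'X^#|A|.

From HB Require Import structures.
From mathcomp Require Import all_boot all_order all_algebra.
From mathcomp Require Import ring lra.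
Set Implicit Arguments. Unset Strict Implicit. Unset Printing Implicit Defensive.
Import Order.TTheory GRing.Theory Num.Theory.
Local Open Scope ring_scope.

(* 1. The four functions theorem (Ahlswede–Daykin): for nonnegative al, be, ga, de
      on the subsets of a finite type with al A * be B <= ga (A :|: B) * de (A :&: B),
      (\sum al) (\sum be) <= (\sum ga) (\sum de).  It is proved for the subsets of a
      set S by induction on #|S|: pairing each A with x |: A for a point x of S reduces
      it to the ground set S :\ x, the new hypothesis being the one-point case.
   2. For L \subset U, the relative complement A^c = L :|: (U :\: A) is the unique B
      with A :&: B = L and A :|: B = U when L \subset A \subset U, and A |-> A^c is an
      order-reversing involution of the interval [L, U].  Applying (1) to
      al A * be A^c, al A^c * be A, ga A * de A^c, ga A^c * de A on [L, U] yields
      (\sum_A al A * be A^c)^2 <= (\sum_A ga A * de A^c)^2 over A in [L, U],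
      hence the same inequality without squares (the interval inequality).
   3. The q^k coefficient of (\sum al A q^|A|)(\sum be B q^|B|) sums al A * be B over
      |A| + |B| = k.  Grouping the pairs (A, B) by (A :&: B, A :|: B) and using
      |A| + |B| = |A :|: B| + |A :&: B|, the interval inequality compares the
      coefficients group by group. *)

Section OnePoint.
Variable R : realDomainType.

Lemma addr_le_of_mulr_le (x y u v : R) :
  0 <= x -> 0 <= y -> 0 <= v -> x <= u -> y <= u -> x * y <= u * v ->
  x + y <= u + v.
Proof.
move=> x0 y0 v0 xu yu xyuv.
have [u_eq0 | u_gt0] := eqVneq u 0.
  have -> : x = 0 by apply/eqP; rewrite eq_le x0 andbT -u_eq0.
  have -> : y = 0 by apply/eqP; rewrite eq_le y0 andbT -u_eq0.
  by rewrite addr0 u_eq0 add0r.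
have u_pos : 0 < u by rewrite lt_def u_gt0 (le_trans x0 xu).
rewrite -(ler_pM2l u_pos).
(* u (x + y) <= u^2 + x y  is  (u - x) (u - y) >= 0. *)
have : (u - x) * (u - y) >= 0 by rewrite mulr_ge0 // subr_ge0.
lra.
Qed.

(* The four functions theorem on a one-point ground set, with values
   a0, a1 of al on the two subsets, and similarly for the other functions. *)
Lemma four_functions_one_point (a0 a1 b0 b1 c0 c1 d0 d1 : R) :
  0 <= a0 -> 0 <= a1 -> 0 <= b0 -> 0 <= b1 ->
  0 <= c0 -> 0 <= c1 -> 0 <= d0 -> 0 <= d1 ->
  a0 * b0 <= c0 * d0 -> a0 * b1 <= c1 * d0 -> a1 * b0 <= c1 * d0 ->
  a1 * b1 <= c1 * d1 -> (a0 + a1) * (b0 + b1) <= (c0 + c1) * (d0 + d1).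
Proof.
move=> ha0 ha1 hb0 hb1 hc0 hc1 hd0 hd1 h00 h01 h10 h11.
have cross : a0 * b1 + a1 * b0 <= c1 * d0 + c0 * d1.
  apply: addr_le_of_mulr_le; rewrite ?mulr_ge0 //.
  have -> : a0 * b1 * (a1 * b0) = (a0 * b0) * (a1 * b1) by ring.
  have -> : c1 * d0 * (c0 * d1) = (c0 * d0) * (c1 * d1) by ring.
  by apply: ler_pM; rewrite ?mulr_ge0.
lra.
Qed.

End OnePoint.

Section FourFunctions.
Variables (R : realDomainType) (T : finType).
Implicit Types (S A B : {set T}) (f al be ga de : {set T} -> R).

Lemma setIU1r_notin (x : T) A B : x \notin A -> A :&: (x |: B) = A :&: B.
Proof. by move=> xA; apply/setP=> y; rewrite !inE; case: eqP => // ->; rewrite (negbTE xA). Qed.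

Lemma setIU1l_notin (x : T) A B : x \notin B -> (x |: A) :&: B = A :&: B.
Proof. by move=> xB; rewrite setIC setIU1r_notin // setIC. Qed.

Lemma sum_subsets_split S (x : T) f : x \in S ->
  \sum_(A : {set T} | A \subset S) f A = \sum_(A : {set T} | A \subset S :\ x) (f A + f (x |: A)).
Proof.
move=> xS; rewrite big_split /= (bigID (fun A : {set T} => x \in A)) /= addrC.
congr (_ + _); first by apply: eq_bigl => A; rewrite subsetD1.
rewrite (reindex_onto (fun A => x |: A) (fun A => A :\ x)); last first.
  by move=> A /andP[_ xA]; rewrite setD1K.
apply: eq_bigl => A; rewrite subsetD1 setU11 subUset sub1set xS /=.
have [xA | xA] := boolP (x \in A).
  have -> : ((x |: A) :\ x == A) = false.
    by apply/negbTE/eqP=> E; move: xA; rewrite -E !inE eqxx.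
  by rewrite !andbT andbF.
have -> : (x |: A) :\ x = A.
  by apply/setP=> y; rewrite !inE; case: (eqVneq y x) => // ->; rewrite (negbTE xA).
by rewrite eqxx !andbT.
Qed.

Lemma sum_subsets0 f : \sum_(A : {set T} | A \subset set0) f A = f set0.
Proof. by rewrite (eq_bigl (pred1 set0)) ?big_pred1_eq // => A; rewrite subset0. Qed.

Lemma four_functions_subsets S al be ga de :
  (forall A, 0 <= al A) -> (forall A, 0 <= be A) ->
  (forall A, 0 <= ga A) -> (forall A, 0 <= de A) ->
  (forall A B, A \subset S -> B \subset S ->
     al A * be B <= ga (A :|: B) * de (A :&: B)) ->
  (\sum_(A : {set T} | A \subset S) al A) * (\sum_(A : {set T} | A \subset S) be A)
  <= (\sum_(A : {set T} | A \subset S) ga A) * (\sum_(A : {set T} | A \subset S) de A).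
Proof.
move: {2}#|S| (erefl #|S|) => k.
elim: k S al be ga de => [|k IH] S al be ga de cardS ha hb hc hd h.
  move/eqP: cardS; rewrite cards_eq0 => /eqP ->; rewrite !sum_subsets0.
  by have := h _ _ (sub0set S) (sub0set S); rewrite setU0 setI0.
have [x xS] : exists x, x \in S by apply/set0Pn; rewrite -card_gt0 cardS.
rewrite !(sum_subsets_split _ xS).
apply: IH => [|A|A|A|A|A B]; rewrite ?addr_ge0 //.
  by apply/eqP; rewrite -eqSS -cardS (cardsD1 x S) xS.
rewrite !subsetD1 => /andP[AS xA] /andP[BS xB].
have xAS : x |: A \subset S by rewrite subUset sub1set xS.
have xBS : x |: B \subset S by rewrite subUset sub1set xS.
apply: four_functions_one_point => //.
- exact: h.
- by have := h _ _ AS xBS; rewrite setUCA setIU1r_notin.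
- by have := h _ _ xAS BS; rewrite -setUA setIU1l_notin.
- by have := h _ _ xAS xBS; rewrite -setUIr setUACA setUid.
Qed.

Theorem four_functions al be ga de :
  (forall A, 0 <= al A) -> (forall A, 0 <= be A) ->
  (forall A, 0 <= ga A) -> (forall A, 0 <= de A) ->
  (forall A B, al A * be B <= ga (A :|: B) * de (A :&: B)) ->
  (\sum_(A : {set T}) al A) * (\sum_(A : {set T}) be A) <= (\sum_(A : {set T}) ga A) * (\sum_(A : {set T}) de A).
Proof.
move=> ha hb hc hd h.
have sumT f : \sum_(A : {set T} | A \subset setT) f A = \sum_(A : {set T}) f A.
  by apply: eq_bigl => A; rewrite subsetT.
by rewrite -!sumT; apply: four_functions_subsets => // A B _ _.
Qed.

End FourFunctions.

Section RelativeComplement.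
Variables (T : finType) (L U : {set T}).
Implicit Types A B : {set T}.

Definition in_interval A : bool := (L \subset A) && (A \subset U).

Definition relcompl A : {set T} := L :|: (U :\: A).

Lemma in_interval_mem A (y : T) :
  in_interval A -> ((y \in L) ==> (y \in A)) && ((y \in A) ==> (y \in U)).
Proof.
case/andP=> /subsetP LA /subsetP AU.
by apply/andP; split; apply/implyP; [exact: LA | exact: AU].
Qed.

Lemma relcomplU A : in_interval A -> A :|: relcompl A = U.
Proof.
move=> IA; apply/setP=> y; move: (in_interval_mem y IA).
by rewrite !inE; do 3?case: (_ \in _).
Qed.

Lemma relcomplI A : in_interval A -> A :&: relcompl A = L.
Proof.
move=> IA; apply/setP=> y; move: (in_interval_mem y IA).
by rewrite !inE; do 3?case: (_ \in _).
Qed.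

Lemma relcomplK A : in_interval A -> relcompl (relcompl A) = A.
Proof.
move=> IA; apply/setP=> y; move: (in_interval_mem y IA).
by rewrite !inE; do 3?case: (_ \in _).
Qed.

Lemma in_interval_relcompl A : in_interval (relcompl A) = (L \subset U).
Proof. by rewrite /in_interval /relcompl subsetUl subUset subsetDl andbT. Qed.

Lemma relcomplUI A B : relcompl (A :|: B) = relcompl A :&: relcompl B.
Proof. by apply/setP=> y; rewrite !inE; do 4?case: (_ \in _). Qed.

Lemma relcomplIU A B : relcompl (A :&: B) = relcompl A :|: relcompl B.
Proof. by apply/setP=> y; rewrite !inE; do 4?case: (_ \in _). Qed.

Lemma in_intervalU A B : in_interval A -> in_interval B -> in_interval (A :|: B).
Proof.
case/andP=> LA AU /andP[_ BU].
by rewrite /in_interval subUset AU BU (subset_trans LA (subsetUl _ _)).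
Qed.

Lemma in_intervalI A B : in_interval A -> in_interval B -> in_interval (A :&: B).
Proof.
case/andP=> LA AU /andP[LB _].
by rewrite /in_interval subsetI LA LB (subset_trans (subsetIl _ _) AU).
Qed.

End RelativeComplement.

Section IntervalInequality.
Variables (R : realDomainType) (T : finType) (L U : {set T}).
Local Notation I := (in_interval L U).
Local Notation c := (relcompl L U).

(* A |-> c A is an involution of the interval [L, U]. *)
Lemma sum_interval_relcompl (G : {set T} -> {set T} -> R) :
  \sum_(A : {set T} | I A) G (c A) A = \sum_(A : {set T} | I A) G A (c A).
Proof.
rewrite (reindex_onto c c) => [|A /relcomplK //].
apply: eq_big => A; last by case/andP=> _ /eqP->.
rewrite in_interval_relcompl.
apply/andP/idP=> [[LU /eqP <-] | IA]; first by rewrite in_interval_relcompl.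
by case/andP: (IA) => LA AU; rewrite (subset_trans LA AU) relcomplK.
Qed.

Variables (al be ga de : {set T} -> R).
Hypotheses (ha : forall A, 0 <= al A) (hb : forall A, 0 <= be A).
Hypotheses (hc : forall A, 0 <= ga A) (hd : forall A, 0 <= de A).
Hypothesis h : forall A B, al A * be B <= ga (A :|: B) * de (A :&: B).

Lemma interval_inequality :
  \sum_(A : {set T} | I A) al A * be (c A) <= \sum_(A : {set T} | I A) ga A * de (c A).
Proof.
pose phi A := al A * be (c A); pose phi' A := al (c A) * be A.
pose psi A := ga A * de (c A); pose psi' A := ga (c A) * de A.
have phi_ge0 A : 0 <= phi A by rewrite mulr_ge0.
have phi'_ge0 A : 0 <= phi' A by rewrite mulr_ge0.
have psi_ge0 A : 0 <= psi A by rewrite mulr_ge0.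
have psi'_ge0 A : 0 <= psi' A by rewrite mulr_ge0.
pose ext (F : {set T} -> R) A := if I A then F A else 0.
have ext_ge0 F : (forall A, 0 <= F A) -> forall A, 0 <= ext F A.
  by move=> F_ge0 A; rewrite /ext; case: ifP.
have sum_ext F : \sum_(A : {set T}) ext F A = \sum_(A : {set T} | I A) F A.
  by rewrite [RHS]big_mkcond.
(* The hypothesis of the four functions theorem for the extended products:
   al A be B al (c B) be (c A) is bounded by applying h to (A, B) and (c B, c A). *)
have ext_h A B : ext phi A * ext phi' B <= ext psi (A :|: B) * ext psi' (A :&: B).
  have RHS_ge0 : 0 <= ext psi (A :|: B) * ext psi' (A :&: B) by rewrite mulr_ge0 ?ext_ge0.
  rewrite {1 2}/ext; have [IA | _] := ifP; last by rewrite mul0r.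
  have [IB | _] := ifP; last by rewrite mulr0.
  rewrite /ext in_intervalU // in_intervalI // /phi /phi' /psi /psi'.
  rewrite relcomplUI relcomplIU mulrACA [be _ * be _]mulrC -mulrACA.
  rewrite [X in _ <= X]mulrACA [de _ * de _]mulrC -[X in _ <= X]mulrACA.
  by apply: ler_pM; rewrite ?mulr_ge0 // setIC setUC.
have := four_functions (ext_ge0 _ phi_ge0) (ext_ge0 _ phi'_ge0)
  (ext_ge0 _ psi_ge0) (ext_ge0 _ psi'_ge0) ext_h.
rewrite !sum_ext /phi' /psi' (sum_interval_relcompl (fun X Y => al X * be Y))
  (sum_interval_relcompl (fun X Y => ga X * de Y)) -!expr2.
by rewrite ler_pXn2r // nnegrE; apply: sumr_ge0.
Qed.

End IntervalInequality.

Lemma relcompl_meet_join (T : finType) (A B : {set T}) :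
  relcompl (A :&: B) (A :|: B) A = B.
Proof. by apply/setP=> y; rewrite !inE; do 2?case: (_ \in _). Qed.

Section MeetJoinRegrouping.
Variables (R : nmodType) (T : finType).

(* B |-> (A :&: B, A :|: B) is a bijection from all subsets onto the intervals
   [L, U] containing A, with inverse (L, U) |-> relcompl L U A. *)
Lemma sum_over_intervals (A : {set T}) (G : {set T} -> R) :
  \sum_(B : {set T}) G B =
  \sum_(L : {set T}) \sum_(U : {set T} | in_interval L U A) G (relcompl L U A).
Proof.
rewrite pair_big_dep /=.
rewrite (reindex_onto (fun B => (A :&: B, A :|: B)) (fun p => relcompl p.1 p.2 A)) /=;
  last by case=> L U /= IA; rewrite relcomplI // relcomplU.
apply: eq_big => B; last by rewrite relcompl_meet_join.
by rewrite relcompl_meet_join eqxx /in_interval subsetIl subsetUl.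
Qed.

Lemma sum_by_meet_join (F : {set T} -> {set T} -> R) :
  \sum_(A : {set T}) \sum_(B : {set T}) F A B =
  \sum_(L : {set T}) \sum_(U : {set T})
    \sum_(A : {set T} | in_interval L U A) F A (relcompl L U A).
Proof.
under eq_bigr => A _ do rewrite (sum_over_intervals A) big_mkcond /=.
under eq_bigr => A _ do under eq_bigr => L _ do rewrite big_mkcond /=.
rewrite exchange_big; apply: eq_bigr => L _.
rewrite exchange_big; apply: eq_bigr => U _.
by rewrite [RHS]big_mkcond.
Qed.

End MeetJoinRegrouping.

Section Coefficients.
Variables (R : numDomainType) (n : nat).

Lemma coef_setgen_mul (f g : {set 'I_n} -> R) (i : nat) :
  (setgen f * setgen g)`_i =
  \sum_(A : {set 'I_n}) \sum_(B : {set 'I_n}) (f A * g B) *+ (#|A| + #|B| == i)%N.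
Proof.
rewrite /setgen mulr_suml coef_sum; apply: eq_bigr => A _.
rewrite mulr_sumr coef_sum; apply: eq_bigr => B _.
by rewrite -scalerAl -scalerAr -exprD !coefZ coefXn mulrA mulr_natr eq_sym.
Qed.

(* The same coefficient grouped by intervals [L, U]: |A| + |B| = |U| + |L|. *)
Lemma coef_setgen_mul_intervals (f g : {set 'I_n} -> R) (i : nat) :
  (setgen f * setgen g)`_i =
  \sum_(L : {set 'I_n}) \sum_(U : {set 'I_n})
    (\sum_(A : {set 'I_n} | in_interval L U A) f A * g (relcompl L U A))
      *+ (#|U| + #|L| == i)%N.
Proof.
rewrite coef_setgen_mul sum_by_meet_join.
apply: eq_bigr => L _; apply: eq_bigr => U _; rewrite -sumrMnl.
by apply: eq_bigr => A IA; rewrite -cardsUI relcomplU // relcomplI.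
Qed.

End Coefficients.

Theorem theorem2p1 (R : realFieldType) (n : nat) (hn : (0 < n)%N)
  (alpha beta gamma delta : {set 'I_n} -> R)
  (ha : forall A, 0 <= alpha A) (hb : forall A, 0 <= beta A)
  (hc : forall A, 0 <= gamma A) (hd : forall A, 0 <= delta A)
  (h : forall A B : {set 'I_n},
         alpha A * beta B <= gamma (A :|: B) * delta (A :&: B)) :
  poly_ll (setgen alpha * setgen beta) (setgen gamma * setgen delta).
Proof.
move=> i; rewrite coefB subr_ge0 !coef_setgen_mul_intervals.
apply: ler_sum => L _; apply: ler_sum => U _; apply: ler_wMn2r.
exact: interval_inequality.
Qed.
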